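(* Let $A$ be an infinite set, fix $z\in A$, $A'=A\setminus\{z\}$, and $p\in[1,\infty)$. Let $\alpha^n=a_1^na_2^n\ldots\in N(A)$ for $n\in\mathbb{N}^*$, $x_n=p_p(\alpha^n)$, and let $\alpha=a_1a_2\ldots\in N(A)$, $x=p_p(\alpha)$. Suppose the sequence $(a_n)_{n\in\mathbb{N}^*}$ is not eventually constant (i.e. for every $q\in\mathbb{N}^*$ it is not constant from index $q$ on) and $\lim_{n\to\infty}\|x_n-x\|_p=0$. Then $\lim_{n\to\infty}\alpha^n=\alpha$ in $N(A)$.
   Context: $l^p(A)$ is the set of families $x=(x_a)_{a\in A'}$ of real numbers with $x_a=0$ for all but countably many $a$ and $\sum_a|x_a|^p<\infty$, with norm $\|x\|_p=(\sum_a|x_a|^p)^{1/p}$. $N(A)$ is the set of all sequences $\alpha=a_1a_2a_3\ldots$ with $a_k\in A$, with metric $d(v,v')=1/k$ where $k$ is the first index at which $v,v'$ differ, and $d(v,v)=0$. The map $p_p:N(A)\to l^p(A)$ is $p_p(\alpha)=(\alpha_b)_{b\in A'}$ where, for $\alpha=a_1a_2\ldots$, $\alpha_b=\sum_{k:\,a_k=b}2^{-k}$ (and $\alpha_b=0$ if no $a_k$ equals $b$). *)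

From HB Require Import structures.
From mathcomp Require Import all_boot all_order all_algebra.
From mathcomp Require Import all_classical all_reals all_analysis.
Set Implicit Arguments. Unset Strict Implicit. Unset Printing Implicit Defensive.
Import Order.TTheory GRing.Theory Num.Theory.
Import numFieldNormedType.Exports.
Local Open Scope classical_set_scope.
Local Open Scope ring_scope.

(* Elements of N(A) are sequences alpha : nat -> A; alpha k is the
   (k+1)-th letter a_(k+1) (0-based storage of the 1-based sequence). *)

(* alpha_b = sum_{k >= 1, a_k = b} 2^{-k}; with 0-based storage the letter
   at position k has weight 2^{-(k+1)}. *)
Definition coord (R : realType) (A : choiceType) (alpha : nat -> A) (b : A) : R :=
  limn (series (fun k : nat => if alpha k == b then (2%:R ^- k.+1 : R) else 0)).

(* p_p(alpha) as a family indexed by A (only its values on A' = A \ {z}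
   matter for the l^p norm below). *)
Definition pp (R : realType) (A : choiceType) (alpha : nat -> A) : A -> R :=
  fun b => coord R alpha b.

Definition lpnorm (R : realType) (A : choiceType) (z : A) (p : R) (x : A -> R) : R :=
  (fine (\esum_(b in [set b : A | b <> z]) ((`|x b| `^ p)%:E))) `^ p^-1.

Definition Nd (R : realType) (A : choiceType) (v v' : nat -> A) : R :=
  match pselect (exists k, v k != v' k) with
  | left h => (ex_minn h).+1%:R^-1
  | right _ => 0
  end.

From Pilot Require Import Defs.
From HB Require Import structures.
From mathcomp Require Import all_boot all_order all_algebra.
From mathcomp Require Import all_classical all_reals all_analysis.
From mathcomp Require Import lra.
Import Order.TTheory GRing.Theory Num.Theory.
Import numFieldNormedType.Exports.
Set Implicit Arguments. Unset Strict Implicit. Unset Printing Implicit Defensive.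
Local Open Scope classical_set_scope.
Local Open Scope ring_scope.

(* Coordinates of p_p are sums of dyadic weights, and the weight 2^-(k+1) of
   position k exceeds the total weight of all later positions.  So if alpha^n
   agrees with alpha before k but not at k, the letter moved at k cannot be
   compensated later: since alpha is not eventually constant, some later
   position j of alpha carries a letter that does not help, and some
   coordinate in A' (or the sum of two of them, when alpha^n_k = z) of
   x_n - x is at least 2^-(j+1) in absolute value.  Every coordinate in A'
   is bounded by the l^p norm, so l^p convergence forces alpha^n to agree with
   alpha on ever longer prefixes, which is convergence in N(A). *)

Section DyadicWeights.
Variable R : realType.

Definition weight (i : nat) : R := 2%:R ^- i.+1.

Lemma weight_gt0 i : 0 < weight i.
Proof. by rewrite invr_gt0 exprn_gt0. Qed.

Lemma weight_le m n : (m <= n)%N -> weight n <= weight m.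
Proof. by move=> mn; rewrite lef_pV2 ?posrE ?exprn_gt0 // ler_eXn2l ?ltr1n. Qed.

Lemma sum_weight m n : (m <= n)%N ->
  \sum_(m <= i < n) weight i = 2%:R ^- m - 2%:R ^- n.
Proof.
move=> mn; rewrite -opprB -(telescope_sumr (fun i => 2%:R ^- i)) // -sumrN.
apply: eq_bigr => i _; rewrite /weight exprS invfM opprB.
by rewrite [X in X - _]splitr mulrC addrK.
Qed.

Lemma sum_weight_le1 n : \sum_(0 <= i < n) weight i <= 1.
Proof. by rewrite sum_weight // expr0 invr1 lerBlDr lerDl invr_ge0 exprn_ge0. Qed.

Section WeightBoundedSeries.
Variable u : nat -> R.
Hypothesis u_bound : forall i, 0 <= u i <= weight i.

Lemma weight_bounded_partial_le1 n : \sum_(0 <= i < n) u i <= 1.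
Proof.
apply: le_trans (sum_weight_le1 n); apply: ler_sum => i _.
by case/andP: (u_bound i).
Qed.

Lemma weight_bounded_series_cvg : cvgn (series u).
Proof.
apply: nondecreasing_is_cvgn.
  move=> m n mn; apply: (nondecreasing_series (P := xpredT)) => // i _ _.
  by case/andP: (u_bound i).
by exists 1 => _ [n _ <-]; exact: weight_bounded_partial_le1.
Qed.

Lemma weight_bounded_series_ge0 : 0 <= limn (series u).
Proof.
apply: limr_ge weight_bounded_series_cvg _; apply: nearW => n.
by apply: sumr_ge0 => i _; case/andP: (u_bound i).
Qed.

Lemma weight_bounded_series_le1 : limn (series u) <= 1.
Proof.
apply: limr_le weight_bounded_series_cvg _; apply: nearW => n.
exact: weight_bounded_partial_le1.
Qed.

End WeightBoundedSeries.

Lemma partial_sum_gap (u v : nat -> R) k j n :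
  (forall i, 0 <= u i <= weight i) -> (forall i, 0 <= v i <= weight i) ->
  (forall i, (i < k)%N -> u i = v i) -> u k = weight k -> v k = 0 ->
  (k < j < n)%N -> v j <= u j ->
  weight j <= \sum_(0 <= i < n) (u i - v i).
Proof.
move=> u_bd v_bd uv_k uk vk /andP[kj jn] vuj.
have kn : (k < n)%N := ltn_trans kj jn.
rewrite (big_cat_nat (leq0n k) (ltnW kn)) /= big1_seq ?add0r; last first.
  by move=> i /andP[_]; rewrite mem_index_iota => /andP[_ /uv_k ->]; rewrite subrr.
rewrite big_ltn // uk vk subr0.
(* Each later position i loses at most weight i, and position j loses nothing;
   all later weights together sum to less than weight k. *)
have tail_shifted : weight j <= \sum_(k.+1 <= i < n) (u i - v i + weight i).
  rewrite (bigD1_seq j) ?iota_uniq ?mem_index_iota ?kj //=.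
  have rest_ge0 : 0 <= \sum_(k.+1 <= i < n | i != j) (u i - v i + weight i).
    by apply: sumr_ge0 => i _; have := u_bd i; have := v_bd i; lra.
  lra.
move: tail_shifted; rewrite big_split /= sum_weight // /weight.
have := invr_ge0 (2%:R ^+ n : R); rewrite exprn_ge0 //; lra.
Qed.

End DyadicWeights.

Section Mass.
Variables (R : realType) (A : choiceType).
Implicit Types (al u v : nat -> A) (P Q : pred A) (b : A).

Definition mass_term al P i : R := if P (al i) then weight R i else 0.

Definition mass al P : R := limn (series (mass_term al P)).

Lemma mass_term_bound al P i : 0 <= mass_term al P i <= weight R i.
Proof. by rewrite /mass_term; case: ifP; rewrite ?lexx ?ltW ?weight_gt0. Qed.

Lemma mass_cvg al P : cvgn (series (mass_term al P)).
Proof. exact/weight_bounded_series_cvg/mass_term_bound. Qed.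

Lemma mass_ge0 al P : 0 <= mass al P.
Proof. exact/weight_bounded_series_ge0/mass_term_bound. Qed.

Lemma mass_le1 al P : mass al P <= 1.
Proof. exact/weight_bounded_series_le1/mass_term_bound. Qed.

Lemma coord_mass al b : Defs.coord R al b = mass al (pred1 b).
Proof. by []. Qed.

Lemma massU al P Q : (forall a, P a -> ~~ Q a) ->
  mass al (predU P Q) = mass al P + mass al Q.
Proof.
move=> PnQ; rewrite /mass -lim_seriesD; try exact: mass_cvg.
congr (limn (series _)); apply/funext => i; rewrite /mass_term /= fctE.
by have [/PnQ/negbTE ->|_] := boolP (P (al i)); rewrite ?addr0 ?add0r.
Qed.

Lemma mass_seq al (s : seq A) : uniq s ->
  mass al [pred a | a \in s] = \sum_(b <- s) Defs.coord R al b.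
Proof.
elim: s => [_|b s IHs /= /andP[bNs s_uniq]].
  rewrite big_nil /mass /mass_term /=.
  by rewrite (_ : series _ = cst 0) ?lim_cst // /series; apply/funext => n; rewrite /= big1.
by rewrite big_cons -IHs // coord_mass -massU => [|a /eqP ->].
Qed.

Lemma mass_gap u v P k j : (forall i, (i < k)%N -> u i = v i) ->
  P (u k) -> ~~ P (v k) -> (k < j)%N -> P (v j) ==> P (u j) ->
  weight R j <= mass u P - mass v P.
Proof.
move=> uv_k Puk Pvk kj Pvuj; rewrite /mass -limB; try exact: mass_cvg.
apply: limr_ge; first by apply: is_cvgB; exact: mass_cvg.
near=> n; have -> : (series (mass_term u P) - series (mass_term v P)) n =
    \sum_(0 <= i < n) (mass_term u P i - mass_term v P i) by rewrite sumrB.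
apply: partial_sum_gap; try exact: mass_term_bound.
- by move=> i /uv_k; rewrite /mass_term => ->.
- by rewrite /mass_term Puk.
- by rewrite /mass_term (negbTE Pvk).
- by rewrite kj /=; near: n; exact: nbhs_infty_gt.
- rewrite /mass_term; case: (P (v j)) Pvuj => [/= ->|_]; first exact: lexx.
  by case: ifP; rewrite ?lexx ?ltW ?weight_gt0.
Unshelve. all: end_near.
Qed.

End Mass.

Lemma powR_le_self (R : realType) (a r : R) : 0 <= a <= 1 -> 1 <= r -> a `^ r <= a.
Proof.
move=> /andP[a_ge0 a_le1] r_ge1; have [->|a_neq0] := eqVneq a 0.
  by rewrite powR0 // gt_eqF // (lt_le_trans _ r_ge1).
by apply: ge1r_powR => //; rewrite a_le1 andbT lt_def a_neq0.
Qed.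

Section LpNorm.
Variables (R : realType) (A : choiceType) (z : A) (p : R).

Lemma norm_le_lpnorm (x : A -> R) c : 0 < p -> c <> z ->
  (\esum_(b in [set b : A | b <> z]) ((`|x b| `^ p)%:E) < +oo)%E ->
  `|x c| <= lpnorm z p x.
Proof.
move=> p_gt0 cz esum_fin.
have term_le : ((`|x c| `^ p)%:E <= \esum_(b in [set b : A | b <> z]) ((`|x b| `^ p)%:E))%E.
  apply: esum_ge; exists [set c]; last by rewrite fsbig_set1.
  by split; [exact: finite_set1 | move=> y ->].
have fine_ge : `|x c| `^ p <= fine (\esum_(b in [set b : A | b <> z]) ((`|x b| `^ p)%:E)).
  by move: term_le esum_fin; case: (\esum_(_ in _) _)%E.
rewrite -[leLHS](powRr1 (normr_ge0 _)) -(mulfV (lt0r_neq0 p_gt0)) powRrM.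
apply: ge0_ler_powR => //; rewrite ?invr_ge0 ?ltW // nnegrE ?powR_ge0 //.
exact: le_trans fine_ge.
Qed.

Lemma esum_pp_diff_le2 (an al : nat -> A) : 1 <= p ->
  (\esum_(b in [set b : A | b <> z]) ((`|pp R an b - pp R al b| `^ p)%:E) <= 2%:E)%E.
Proof.
move=> p_ge1; apply: ge_ereal_sup => _ [X [X_fin _] <-].
rewrite fsumEFin // lee_fin fsbig_finite //=; set s := finmap.enum_fset _.
have coord_sum_le1 (v : nat -> A) : \sum_(b <- s) Defs.coord R v b <= 1.
  by rewrite -mass_seq ?finmap.fset_uniq ?mass_le1.
apply: le_trans (_ : \sum_(b <- s) (Defs.coord R an b + Defs.coord R al b) <= 2).
  apply: ler_sum => b _; rewrite /pp.
  have := mass_ge0 R an (pred1 b); have := mass_le1 R an (pred1 b).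
  have := mass_ge0 R al (pred1 b); have := mass_le1 R al (pred1 b).
  rewrite -!coord_mass => al_le1 al_ge0 an_le1 an_ge0.
  apply: le_trans (powR_le_self _ p_ge1) _.
    by rewrite normr_ge0 /= ler_norml; apply/andP; split; lra.
  by apply: le_trans (ler_normB _ _) _; rewrite !ger0_norm.
by rewrite big_split /=; have := coord_sum_le1 an; have := coord_sum_le1 al; lra.
Qed.

Lemma pp_diff_le_lpnorm (an al : nat -> A) c : 1 <= p -> c <> z ->
  `|pp R an c - pp R al c| <= lpnorm z p (fun b => pp R an b - pp R al b).
Proof.
move=> p_ge1 cz; apply: norm_le_lpnorm => //; first exact: lt_le_trans p_ge1.
exact: le_lt_trans (esum_pp_diff_le2 an al p_ge1) (ltry _).
Qed.

End LpNorm.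

Lemma lpnorm_pp_gap (R : realType) (A : choiceType) (z : A) (p : R)
    (an al : nat -> A) k j1 j2 :
  1 <= p -> (forall i, (i < k)%N -> an i = al i) -> an k != al k ->
  (k < j1 < j2)%N -> al j1 != al j2 ->
  weight R j2 / 2 <= lpnorm z p (fun b => pp R an b - pp R al b).
Proof.
move=> p_ge1 agree_k an_al_k /andP[kj1 j12] jump.
set N := lpnorm _ _ _.
have coord_le_N c : c <> z -> `|Defs.coord R an c - Defs.coord R al c| <= N.
  exact: pp_diff_le_lpnorm.
have N_ge0 : 0 <= N by exact: powR_ge0.
have pick_index c : exists j,
    [/\ (k < j)%N, weight R j2 <= weight R j & al j != c].
  have [alj1_c|alj1_nc] := eqVneq (al j1) c.
    by exists j2; split; [exact: ltn_trans kj1 j12 | exact: lexx | rewrite -alj1_c eq_sym].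
  by exists j1; split; [| exact/weight_le/ltnW |].
have wj2_gt0 := weight_gt0 R j2.
have [ank_z|ank_nz] := eqVneq (an k) z.
- (* The coordinate z is invisible to the norm: compare instead the mass of
     alpha on the (at most two) letters alpha k, alpha j of A'. *)
  have [j [kj wj2_le_wj alj_z]] := pick_index z.
  have alk_nz : al k != z by rewrite -ank_z eq_sym.
  set s := undup [:: al k; al j].
  have := @mass_gap R A al an [pred a | a \in s] k j.
  rewrite /= !mem_undup !inE !eqxx ank_z ![z == _]eq_sym (negbTE alk_nz) (negbTE alj_z) orbT.
  move=> /(_ (fun i ik => esym (agree_k i ik)) isT isT kj (implybT _)).
  rewrite !mass_seq ?undup_uniq // -sumrB => gap.
  have : \sum_(d <- s) (Defs.coord R al d - Defs.coord R an d) <= N + N.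
    have term_le d : d != z -> Defs.coord R al d - Defs.coord R an d <= N.
      move=> /eqP dz; apply: le_trans (coord_le_N d dz).
      by rewrite distrC ler_norm.
    have := term_le _ alk_nz; have := term_le _ alj_z.
    rewrite /s /= inE; case: eqP => _; rewrite !big_cons big_nil; lra.
  lra.
- have [j [kj wj2_le_wj alj_c]] := pick_index (an k).
  have := @mass_gap R A an al (pred1 (an k)) k j agree_k.
  rewrite /= eqxx eq_sym (negbTE an_al_k) (negbTE alj_c) -!coord_mass.
  move=> /(_ isT isT kj isT) gap.
  have := ler_norm (Defs.coord R an (an k) - Defs.coord R al (an k)).
  have := coord_le_N _ (elimN eqP ank_nz); lra.
Qed.

Lemma not_eventually_constant_jump (A : eqType) (al : nat -> A) :
  (forall q, ~ (forall m, (q <= m)%N -> al m = al q)) ->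
  forall k, exists j, (k < j)%N /\ al k != al j.
Proof.
move=> not_const k; have /existsNP [j /not_implyP [kj alj]] := not_const k.
exists j; split; last by apply/eqP => /esym.
by rewrite ltn_neqAle kj andbT; apply: contra_notN alj => /eqP <-.
Qed.

Lemma Nd_ge0 (R : realType) (A : choiceType) (v v' : nat -> A) : 0 <= Nd R v v'.
Proof. by rewrite /Nd; case: pselect. Qed.

Lemma Nd_le_agree (R : realType) (A : choiceType) (v v' : nat -> A) K :
  (forall i, (i < K)%N -> v i = v' i) -> Nd R v v' <= K.+1%:R^-1.
Proof.
move=> agree_K; rewrite /Nd; case: pselect => [diff|_]; last by rewrite invr_ge0.
case: ex_minnP => m vm_neq _; rewrite lef_pV2 ?posrE // ler_nat ltnS leqNgt.
by apply: contraNN vm_neq => /agree_K ->.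
Qed.

Lemma Nd_cvg0 (R : realType) (A : choiceType) (vs : nat -> nat -> A) v :
  (forall K, \forall n \near \oo, forall i, (i < K)%N -> vs n i = v i) ->
  (fun n => Nd R (vs n) v) @ \oo --> 0.
Proof.
move=> agree; apply/cvgrPdist_le => e e_gt0.
have [K _ small] := near_infty_natSinv_lt (PosNum e_gt0).
apply: filterS (agree K) => n /Nd_le_agree Nd_le.
rewrite sub0r normrN ger0_norm ?Nd_ge0 //.
exact: le_trans (Nd_le R) (ltW (small K (leqnn K))).
Qed.

Theorem proposition3p3 (R : realType) (A : choiceType) (z : A) (p : R)
  (alphas : nat -> (nat -> A)) (alpha : nat -> A) :
  infinite_set [set: A] ->
  1 <= p ->
  (forall q : nat, ~ (forall m : nat, (q <= m)%N -> alpha m = alpha q)) ->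
  (fun n => lpnorm z p (fun b => pp R (alphas n) b - pp R alpha b)) @ \oo --> (0 : R) ->
  (fun n => Nd R (alphas n) alpha) @ \oo --> (0 : R).
Proof.
move=> _ p_ge1 not_const lim_lp; apply: Nd_cvg0.
elim=> [|K agree_K]; first exact: nearW.
have [j [Kj jump]] := not_eventually_constant_jump not_const K.+1.
have gap_gt0 : 0 < weight R j / 2 by rewrite divr_gt0 ?weight_gt0.
have lp_small : \forall n \near \oo,
    lpnorm z p (fun b => pp R (alphas n) b - pp R alpha b) < weight R j / 2.
  move/cvgrPdist_lt : lim_lp => /(_ _ gap_gt0); apply: filterS => n.
  by rewrite sub0r normrN; apply: le_lt_trans (ler_norm _).
near=> n.
have agree_n : forall i, (i < K)%N -> alphas n i = alpha i by near: n.
move=> i; rewrite ltnS leq_eqVlt => /orP[/eqP ->|/agree_n //].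
apply/eqP/negPn/negP => differ_K.
have := lpnorm_pp_gap z p_ge1 agree_n differ_K (j1 := K.+1) (j2 := j).
rewrite ltnSn Kj => /(_ isT jump).
have : lpnorm z p (fun b => pp R (alphas n) b - pp R alpha b) < weight R j / 2 by near: n.
lra.
Unshelve. all: end_near.
Qed.
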